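(* Let $[a,b]\subset(0,1)$ and let $M$ be a differential module on $\Delta_{[a,b]}$ satisfying the Robba condition. Let $L$ be the rank one differential module defined by $\frac{\mathrm{d}}{\mathrm{d}x}-\frac{\pi}{x^2}$, restricted to $\Delta_{[a,b]}$. Then $\mathrm{H}^0_{\mathrm{DR}}(\Delta_{[a,b]},M\otimes L)=0$.
   Context: $K$ is a complete ultrametric field of characteristic $0$ with residue field of characteristic $p>0$, containing $\pi$ with $\pi^{p-1}+p=0$. $\Delta_I$ is the rigid annulus $\{x\in K^{\mathrm{alg}}:|x|\in I\}$ with structure sheaf $\mathcal{O}$; a differential module over $\Delta_I$ is a finite free $\mathcal{O}$-module with integrable connection. $F_\rho$ is the completion of $K(x)$ for the $\rho$-Gauss norm, $M\otimes F_\rho$ the induced differential module with $D=\nabla_{\mathrm{d}/\mathrm{d}x}$; its radius of convergence is $\mathrm{R}=|\pi|\cdot|D|_{\mathrm{sp}}^{-1}$ where $|D|_{\mathrm{sp}}=\lim_s|D^s|^{1/s}$. $M$ satisfies the Robba condition if $\mathrm{R}(M\otimes F_\rho)=\rho$ for all $\rho\in I$. $\mathrm{H}^0_{\mathrm{DR}}$ denotes global horizontal sections. *)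

From HB Require Import structures.
From Stdlib Require Import ClassicalEpsilon.
From mathcomp Require Import all_boot all_order all_algebra.
From mathcomp Require Import all_classical all_reals all_analysis.
Set Implicit Arguments. Unset Strict Implicit. Unset Printing Implicit Defensive.
Import Order.TTheory GRing.Theory Num.Theory.
Local Open Scope ring_scope.
Local Open Scope classical_set_scope.

Section PadicDiffMod.
Variables (R : realType) (K : fieldType) (absK : K -> R).

Definition ultrametric_abs : Prop :=
  [/\ forall x, absK x = 0 <-> x = 0,
      forall x y, absK (x * y) = absK x * absK y &
      forall x y, absK (x + y) <= Num.max (absK x) (absK y)].

Definition K_cvg (u : nat -> K) (l : K) : Prop :=
  forall e : R, 0 < e -> exists N : nat, forall m, (N <= m)%N -> absK (u m - l) < e.
Definition K_cauchy (u : nat -> K) : Prop :=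
  forall e : R, 0 < e -> exists N : nat, forall m k, (N <= m)%N -> (N <= k)%N ->
    absK (u m - u k) < e.
Definition K_complete : Prop := forall u, K_cauchy u -> exists l, K_cvg u l.

(** Laurent series  sum_{n in Z} c_n x^n  are coefficient functions int -> K. *)
Definition lser := int -> K.

(** f is an analytic function on the annulus Delta_[a,b]:
    |c_n| r^n -> 0 as |n| -> oo, for every r in [a,b]. *)
Definition analytic_on (a b : R) (f : lser) : Prop :=
  forall r : R, a <= r <= b -> forall e : R, 0 < e ->
    exists N : nat, forall m : int, (N <= `|m|)%N -> absK (f m) * r ^ m < e.

Definition tsum_to (u : int -> K) (l : K) : Prop :=
  forall e : R, 0 < e -> exists N : nat, forall m1 m2 : nat,
    (N <= m1)%N -> (N <= m2)%N ->
    absK ((\sum_(i < m1 + m2) u (i%:Z - m1%:Z)) - l) < e.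
Definition tsum (u : int -> K) : K := epsilon (inhabits 0) (tsum_to u).

Definition lmul (f g : lser) : lser := fun m => tsum (fun k => f k * g (m - k)).
Definition lderiv (f : lser) : lser := fun m => (m + 1)%:~R * f (m + 1).

Definition poly_ser (q : {poly K}) : lser :=
  fun m => match m with Posz k => q`_k | Negz _ => 0 end.

Definition gnorm (rho : R) (f : lser) : R := sup [set absK (f m) * rho ^ m | m in setT].

Variable n : nat.
(** A differential module M over Delta_I, free of rank n, in a chosen basis:
    D = nabla_{d/dx} acts on O^n by  D v = v' + G v. *)
Definition conn (G : 'I_n -> 'I_n -> lser) (v : 'I_n -> lser) : 'I_n -> lser :=
  fun i m => lderiv (v i) m + \sum_(j < n) lmul (G i j) (v j) m.

(** sup norm on (M (x) F_rho) = F_rho^n in the chosen basis *)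
Definition vnorm (rho : R) (v : 'I_n -> lser) : R := \big[Num.max/0]_(i < n) gnorm rho (v i).

(** D^s (w / q) = (Dnum s) / q^(s+1), computed via
    D (u / q^k) = (q D u - k q' u) / q^(k+1). *)
Definition Dstep (G : 'I_n -> 'I_n -> lser) (q : {poly K}) (u : 'I_n -> lser) (k : nat) :
  'I_n -> lser :=
  fun i m => lmul (poly_ser q) (conn G u i) m - k%:R * lmul (poly_ser q^`()) (u i) m.
Fixpoint Dnum (G : 'I_n -> 'I_n -> lser) (q : {poly K}) (w : 'I_n -> lser) (s : nat) :
  'I_n -> lser :=
  match s with 0%N => w | s'.+1 => Dstep G q (Dnum G q w s') s'.+1 end.

(** Operator norm |D^s| on M (x) F_rho, computed on the dense subset of
    elements w/q (w in O(Delta_[a,b])^n, q in K[x] nonzero) of F_rho^n. *)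
Definition opnorm_pow (a b : R) (G : 'I_n -> 'I_n -> lser) (rho : R) (s : nat) : R :=
  sup [set t : R | exists (w : 'I_n -> lser) (q : {poly K}),
         [/\ forall i, analytic_on a b (w i), q != 0, vnorm rho w != 0 &
             t = vnorm rho (Dnum G q w s) / (vnorm rho w * gnorm rho (poly_ser q) ^+ s)]].

Definition spec_norm (a b : R) (G : 'I_n -> 'I_n -> lser) (rho : R) : R :=
  limn (fun s : nat => powR (opnorm_pow a b G rho s) (s%:R)^-1).

Definition radius (pi : K) (a b : R) (G : 'I_n -> 'I_n -> lser) (rho : R) : R :=
  absK pi / spec_norm a b G rho.

Definition robba (pi : K) (a b : R) (G : 'I_n -> 'I_n -> lser) : Prop :=
  forall rho : R, a <= rho <= b -> radius pi a b G rho = rho.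

(** Matrix of M (x) L, where L = (O, d/dx - pi/x^2):
    D = d/dx + G - (pi x^-2) Id. *)
Definition tensorL (pi : K) (G : 'I_n -> 'I_n -> lser) : 'I_n -> 'I_n -> lser :=
  fun i j m => G i j m - (if (i == j) && (m == -2) then pi else 0).

End PadicDiffMod.

From Pilot Require Import Defs.
From Stdlib Require Import ClassicalEpsilon.
From mathcomp Require Import all_boot all_order all_algebra.
From mathcomp Require Import all_classical all_reals all_analysis.
From mathcomp Require Import zify ring.
Set Implicit Arguments. Unset Strict Implicit. Unset Printing Implicit Defensive.
Import Order.TTheory GRing.Theory Num.Theory.
Local Open Scope ring_scope.

(* If f is a horizontal section of M (x) L, then the connection D of M
   satisfies D f = pi x^-2 f, hence D^s f = P_s f for Laurent polynomials P_s
   whose lowest-degree term is pi^s x^-2s.  Comparing the least indices at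
   which the weighted coefficients of P_s and of f are maximal shows that the
   a-Gauss norm is multiplicative on these products, so
   |D^s f|_a >= (|pi| / a^2)^s |f|_a and |D|_sp >= |pi| / a^2 on M (x) F_a.
   The Robba condition at rho = a says |D|_sp = |pi| / a, which is smaller
   because a < 1; hence f = 0. *)

Section WindowSums.
Variable V : nmodType.

Lemma sum_window_split (u : int -> V) (m1 m2 : nat) :
  \sum_(i < m1 + m2) u (i%:Z - m1%:Z) =
  \sum_(i < m1) u (- (i.+1)%:Z) + \sum_(i < m2) u i%:Z.
Proof.
rewrite big_split_ord /=; congr (_ + _).
  rewrite (reindex_inj rev_ord_inj) /=; apply: eq_bigr => i _.
  by congr u; have := ltn_ord i; lia.
by apply: eq_bigr => i _; congr u; lia.
Qed.

Lemma sum_ord_delta (N j : nat) (c : V) : (j < N)%N ->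
  \sum_(i < N) (if (i : nat) == j then c else 0) = c.
Proof.
move=> jN; rewrite (bigD1 (Ordinal jN)) //= eqxx big1 ?addr0 // => i ne.
by case: eqP => // eij; case/negP: ne; apply/eqP/val_inj.
Qed.

End WindowSums.

Section LaurentPolyMul.
Variable K : fieldType.

(* [lpoly_mul W P v] is the product of the series [v] with a Laurent polynomial
   [P] whose support lies in [-W, 0]. *)
Definition lpoly_mul (W : nat) (P v : int -> K) : int -> K :=
  fun m => \sum_(j < W.+1) P (- (j%:Z)) * v (m + j%:Z).

Definition supported_in (W : nat) (P : int -> K) :=
  forall k : int, (k < - W%:Z) || (0 < k) -> P k = 0.

Lemma lpoly_mul_widen W W' P v m : supported_in W P -> (W <= W')%N ->
  lpoly_mul W P v m = lpoly_mul W' P v m.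
Proof.
move=> sP le; rewrite /lpoly_mul.
rewrite (big_ord_widen W'.+1 (fun j : nat => P (- (j%:Z)) * v (m + j%:Z))) //.
rewrite big_mkcond /=; apply: eq_bigr => j _; case: ifP => // h.
by rewrite sP ?mul0r //; apply/orP; left; move: h; lia.
Qed.

Lemma supported_in_lderiv W P : supported_in W P -> supported_in W.+1 (lderiv P).
Proof. by move=> sP k hk; rewrite /lderiv sP ?mulr0 //; move: hk; lia. Qed.

Lemma lderiv_lpoly_mul W P v m : supported_in W P ->
  lderiv (lpoly_mul W P v) m =
  lpoly_mul W P (lderiv v) m + lpoly_mul W.+1 (lderiv P) v m.
Proof.
move=> sP; rewrite /lderiv /lpoly_mul.
rewrite [X in _ = _ + X]big_ord_recl /=.
rewrite (sP (- 0%:Z + 1)); last by apply/orP; right.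
rewrite mulr0 mul0r add0r mulr_sumr -big_split /=; apply: eq_bigr => j _.
rewrite /bump /= add1n.
have -> : - (j.+1)%:Z + 1 = - j%:Z by lia.
have -> : m + (j.+1)%:Z = m + j%:Z + 1 by lia.
have -> : m + 1 + j%:Z = m + j%:Z + 1 by lia.
rewrite !intrD intrN; ring.
Qed.

Lemma lpoly_mul_shift2 W P v c m : supported_in W P ->
  lpoly_mul W P (fun m => c * v (m + 2)) m =
  lpoly_mul W.+2 (fun k => c * P (k + 2)) v m.
Proof.
move=> sP; rewrite /lpoly_mul [RHS]big_ord_recl /= [X in _ = _ + X]big_ord_recl /=.
rewrite (sP (- 0%:Z + 2)) ?(sP (- (bump 0 0)%:Z + 2)) ?mulr0 ?mul0r ?add0r;
  try by apply/orP; right.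
apply: eq_bigr => j _; rewrite /bump /=.
have -> : - ((1 + (1 + j))%N)%:Z + 2 = - j%:Z by lia.
have -> : m + ((1 + (1 + j))%N)%:Z = m + j%:Z + 2 by lia.
ring.
Qed.

Lemma lpoly_mulB W P u v m :
  lpoly_mul W P (fun m => u m - v m) m = lpoly_mul W P u m - lpoly_mul W P v m.
Proof. by rewrite /lpoly_mul -sumrB /=; apply: eq_bigr => j _; rewrite mulrBr. Qed.

Lemma lpoly_mulDl W P1 P2 v m :
  lpoly_mul W (fun k => P1 k + P2 k) v m = lpoly_mul W P1 v m + lpoly_mul W P2 v m.
Proof. by rewrite /lpoly_mul -big_split /=; apply: eq_bigr => j _; rewrite mulrDl. Qed.

Lemma lpoly_mul_sum W P (N : nat) (v : 'I_N -> int -> K) m :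
  \sum_(l < N) lpoly_mul W P (v l) m = lpoly_mul W P (fun m => \sum_(l < N) v l m) m.
Proof. by rewrite /lpoly_mul exchange_big /=; apply: eq_bigr => j _; rewrite mulr_sumr. Qed.

Lemma poly_ser1 k : poly_ser (1 : {poly K}) k = if k == 0 then 1 else 0.
Proof. by case: k => [j|j] //=; rewrite -polyC1 coefC. Qed.

Variable pi : K.

Fixpoint Dcoef (s : nat) : int -> K :=
  match s with
  | 0%N => fun k => if k == 0 then 1 else 0
  | s'.+1 => fun k => lderiv (Dcoef s') k + pi * Dcoef s' (k + 2)
  end.

Lemma Dcoef_supported s : supported_in (2 * s) (Dcoef s).
Proof.
elim: s => [|s IH] k hk /=.
  by case: eqP => // e; move: hk; rewrite e; lia.
rewrite /lderiv !IH ?mulr0 ?addr0 //; move: hk; lia.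
Qed.

Lemma Dcoef_lowest s : Dcoef s (- (2 * s)%N%:Z) = pi ^+ s.
Proof.
elim: s => [|s IH] /=; first by rewrite ?mul0n ?eqxx ?expr0.
rewrite /lderiv Dcoef_supported ?mulr0 ?add0r; last by lia.
have -> : - (2 * s.+1)%N%:Z + 2 = - (2 * s)%N%:Z by lia.
by rewrite IH exprS.
Qed.

End LaurentPolyMul.

Lemma ltr_leM (R : numDomainType) (x1 y1 x2 y2 : R) :
  0 <= x1 -> x1 < y1 -> 0 <= x2 -> x2 <= y2 -> 0 < y2 -> x1 * x2 < y1 * y2.
Proof.
move=> x1_ge0 lt1 x2_ge0 le2 y2_gt0.
by apply: le_lt_trans (ler_wpM2l x1_ge0 le2) _; rewrite ltr_pM2r.
Qed.

Section IntSeqMax.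
Variable R : realType.

Definition eventually_small (u : int -> R) := forall e : R, 0 < e ->
  exists N : nat, forall k : int, (N <= `|k|)%N -> u k < e.

Lemma eventually_small_max (u : int -> R) k0 : eventually_small u -> 0 < u k0 ->
  exists ks, forall k, u k <= u ks.
Proof.
move=> du uk0; have [N HN] := du _ uk0.
have window k : (`|k| < N)%N -> (absz (k + N%:Z)%R < N + N)%N by lia.
have hk0 : (`|k0| < N)%N by rewrite ltnNge; apply/negP => /HN; rewrite ltxx.
pose F (j : 'I_(N + N)) := Num.max 0 (u (j%:Z - N%:Z)).
have [i0 _ Hi0] := @eq_bigmax _ _ _ 0 (Ordinal (window _ hk0)) xpredT F isT
  (fun i _ => ltac:(by rewrite le_max lexx)).
have F_ge k (hk : (`|k| < N)%N) : u k <= F (Ordinal (window _ hk)).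
  by rewrite /F /= le_max (_ : _ - _ = k) ?lexx ?orbT //; lia.
have uk0_le : u k0 <= F i0 by rewrite -Hi0; apply: le_trans (F_ge _ hk0) (le_bigmax _ _ _).
have Fi0 : F i0 = u (i0%:Z - N%:Z).
  apply/max_idPr; apply: le_trans (ltW uk0) _; move: uk0_le; rewrite le_max.
  by case/orP => // h; move: (lt_le_trans uk0 h); rewrite ltxx.
exists (i0%:Z - N%:Z) => k; rewrite -Fi0.
case: (leqP N `|k|) => hk; first by apply: le_trans (ltW (HN _ hk)) uk0_le.
by rewrite -Hi0; apply: le_trans (F_ge _ hk) (le_bigmax _ _ _).
Qed.

Definition least_argmax (u : int -> R) (ks : int) :=
  (forall k, u k <= u ks) /\ (forall k, k < ks -> u k < u ks).

Lemma eventually_small_least_argmax (u : int -> R) k0 :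
  eventually_small u -> 0 < u k0 -> exists ks, least_argmax u ks.
Proof.
move=> du uk0; have [km Hkm] := eventually_small_max du uk0.
have [N HN] := du _ uk0.
pose P t := `[< forall k, u k <= u (t%:Z - N%:Z) >].
have hkm : (`|km| < N)%N by rewrite ltnNge; apply/negP => /HN; rewrite ltNge Hkm.
have exP : exists t, P t.
  by exists (absz (km + N%:Z)%R); apply/asboolP; rewrite (_ : _ - _ = km) //; lia.
case: (ex_minnP exP) => t /asboolP Pt tmin.
exists (t%:Z - N%:Z); split => // k hk.
case: (leqP N `|k|) => hN; first by apply: lt_le_trans (HN _ hN) (Pt k0).
rewrite lt_neqAle Pt andbT; apply/eqP => e.
have : (t <= absz (k + N%:Z)%R)%N.
  by apply: tmin; apply/asboolP; rewrite (_ : _ - _ = k) ?e //; lia.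
lia.
Qed.

End IntSeqMax.

Import numFieldNormedType.Exports.
Local Open Scope classical_set_scope.

(* [limn] returns the junk value 0 on divergent sequences, hence the hypothesis
   that the limit is nonzero. *)
Lemma limn_root_ge (R : realType) (u : nat -> R) (c : R) : 0 < c ->
  (forall s, (0 < s)%N -> u s = 0 \/ c ^+ s <= u s) ->
  limn (fun s : nat => powR (u s) s%:R^-1) != 0 ->
  c <= limn (fun s : nat => powR (u s) s%:R^-1).
Proof.
move=> c0 H L0; set v := fun s : nat => _.
have cv : cvgn v by apply: cvgNpoint.
have L_gt0 : 0 < limn v.
  by rewrite lt_def L0 /=; apply: limr_ge cv _; apply: nearW => s; apply: powR_ge0.
have v_gt0 : \forall s \near \oo, 0 < v s by apply: (cvgr_gt (limn v) cv 0 L_gt0).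
apply: limr_ge cv _; near=> s.
have vs0 : 0 < v s by near: s.
have s0 : (0 < s)%N by near: s; exists 1%N.
have sR : (s%:R : R) != 0 by rewrite pnatr_eq0 -lt0n.
case: (H s s0) => [us0|hs].
  by move: vs0; rewrite /v us0 powR0 ?ltxx // invr_eq0.
have -> : c = powR (c ^+ s) s%:R^-1.
  by rewrite -powR_mulrn ?ltW // -powRrM mulfV // powRr1 // ltW.
apply: ge0_ler_powR => //; rewrite ?invr_ge0 ?ler0n // nnegrE ?exprn_ge0 ?ltW //.
exact: lt_le_trans (exprn_gt0 s c0) hs.
Unshelve. all: by end_near.
Qed.

Section Ultrametric.
Variables (R : realType) (K : fieldType) (absK : K -> R).
Hypothesis absK_ultra : ultrametric_abs absK.

Lemma absK_eq0 x : (absK x == 0) = (x == 0).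
Proof. by case: absK_ultra => H _ _; apply/eqP/eqP => /H. Qed.

Lemma absK0 : absK 0 = 0.
Proof. by apply/eqP; rewrite absK_eq0. Qed.

Lemma absKM x y : absK (x * y) = absK x * absK y.
Proof. by case: absK_ultra. Qed.

Lemma absKD x y : absK (x + y) <= Num.max (absK x) (absK y).
Proof. by case: absK_ultra. Qed.

Lemma absK1 : absK 1 = 1.
Proof.
have h : absK 1 * absK 1 = absK 1 * 1 by rewrite -absKM !mulr1.
by apply: mulfI h; rewrite absK_eq0 oner_eq0.
Qed.

Lemma absKX x s : absK (x ^+ s) = absK x ^+ s.
Proof. by elim: s => [|s IH]; rewrite ?expr0 ?absK1 // !exprS absKM IH. Qed.

(* The axioms alone allow [absK (-1) = -1]; an integer of absolute value
   [< 1] rules this out, since then all negative integers would have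
   absolute value [<= -1]. *)
Variable p : nat.
Hypotheses (p_gt0 : (0 < p)%N) (absK_p : absK p%:R < 1).

Lemma absKN1 : absK (-1) = 1.
Proof.
have : absK (-1) ^+ 2 = 1 by rewrite expr2 -absKM mulrNN mulr1 absK1.
move/eqP; rewrite sqrf_eq1 => /orP[/eqP//|/eqP hm]; exfalso.
have le_m1 m : absK (- (m.+1)%:R) <= -1.
  elim: m => [|m IH]; first by rewrite hm.
  rewrite -addn1 natrD opprD; apply: le_trans (absKD _ _) _.
  by rewrite ge_max IH hm lexx.
have := le_m1 p.-1; rewrite prednK // -mulN1r absKM hm mulN1r lerN2.
by rewrite leNgt absK_p.
Qed.

Lemma absKN x : absK (- x) = absK x.
Proof. by rewrite -mulN1r absKM absKN1 mul1r. Qed.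

Lemma absK_ge0 x : 0 <= absK x.
Proof. by have := absKD x (- x); rewrite subrr absK0 absKN maxxx. Qed.

Lemma absK_gt0 x : (0 < absK x) = (x != 0).
Proof. by rewrite lt_def absK_eq0 absK_ge0 andbT. Qed.

Lemma absKB x y : absK (x - y) = absK (y - x).
Proof. by rewrite -absKN opprB. Qed.

Lemma absKD_lt x y t : absK x < t -> absK y < t -> absK (x + y) < t.
Proof. by move=> hx hy; apply: le_lt_trans (absKD _ _) _; rewrite gt_max hx hy. Qed.

Lemma absK_sum_lt (I : Type) (r : seq I) (P : pred I) (F : I -> K) t :
  0 < t -> (forall i, P i -> absK (F i) < t) -> absK (\sum_(i <- r | P i) F i) < t.
Proof.
move=> t0 H; elim/big_rec: _ => [|i x Pi IH]; first by rewrite absK0.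
exact: absKD_lt (H _ Pi) IH.
Qed.

Lemma absKD_dom x y : absK y < absK x -> absK (x + y) = absK x.
Proof.
move=> h; apply/eqP; rewrite eq_le; apply/andP; split.
  by apply: le_trans (absKD _ _) _; rewrite ge_max lexx (ltW h).
have := absKD (x + y) (- y); rewrite addrK absKN le_max => /orP[//|h3].
by move: (le_lt_trans h3 h); rewrite ltxx.
Qed.

Hypothesis absK_complete : K_complete absK.

Definition decays_at (r : R) (u : int -> K) := forall e : R, 0 < e ->
  exists N : nat, forall m : int, (N <= `|m|)%N -> absK (u m) * r ^ m < e.

Lemma partial_sums_cvg (w : nat -> K) :
  (forall e : R, 0 < e -> exists N : nat, forall i, (N <= i)%N -> absK (w i) < e) ->
  exists l, forall e : R, 0 < e -> exists N : nat, forall m, (N <= m)%N ->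
    absK (\sum_(i < m) w i - l) < e.
Proof.
move=> w_small.
have : K_cauchy absK (fun m => \sum_(i < m) w i).
  move=> e e0; have [N HN] := w_small e e0; exists N => m k Nm Nk.
  wlog km : m k Nm Nk / (k <= m)%N.
    by move=> H; case: (leqP k m) => [|/ltnW] h; [|rewrite absKB]; apply: H.
  rewrite -!(big_mkord xpredT) (big_cat_nat (leq0n k) km) /= addrC addrK.
  rewrite big_nat_cond; apply: absK_sum_lt => // i /andP[/andP[ki _] _].
  by apply: HN; apply: leq_trans Nk ki.
case/absK_complete => l Hl; exists l => e /Hl[N HN].
by exists N => m Nm; apply: HN.
Qed.

Lemma tsum_to_split (u : int -> K) lN lP :
  (forall e : R, 0 < e -> exists N : nat, forall m, (N <= m)%N ->
    absK (\sum_(i < m) u (- (i.+1)%:Z) - lN) < e) ->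
  (forall e : R, 0 < e -> exists N : nat, forall m, (N <= m)%N ->
    absK (\sum_(i < m) u i%:Z - lP) < e) ->
  tsum_to absK u (lN + lP).
Proof.
move=> HN HP e e0; have [N1 H1] := HN e e0; have [N2 H2] := HP e e0.
exists (maxn N1 N2) => m1 m2 h1 h2; rewrite sum_window_split opprD addrACA.
by apply: absKD_lt; [apply: H1 | apply: H2]; lia.
Qed.

Lemma tsum_to_exists u : decays_at 1 u -> exists l, tsum_to absK u l.
Proof.
move=> du.
have small (g : nat -> int) : (forall i, (i <= `|g i|)%N) ->
    forall e : R, 0 < e -> exists N : nat, forall i, (N <= i)%N -> absK (u (g i)) < e.
  move=> hg e /du[N HN]; exists N => i Ni.
  by have := HN (g i) (leq_trans Ni (hg i)); rewrite exp1rz mulr1.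
have [lN HN] := partial_sums_cvg (small (fun i => - (i.+1)%:Z) ltac:(by move=> i; lia)).
have [lP HP] := partial_sums_cvg (small (fun i => i%:Z) ltac:(by move=> i; lia)).
by exists (lN + lP); apply: tsum_to_split.
Qed.

Lemma tsum_to_uniq u l1 l2 : tsum_to absK u l1 -> tsum_to absK u l2 -> l1 = l2.
Proof.
move=> h1 h2; apply/eqP; rewrite -subr_eq0 -absK_eq0 //; apply/negPn/negP => ne.
have e0 : 0 < absK (l1 - l2) by rewrite absK_gt0 // -absK_eq0.
have [N1 H1] := h1 _ e0; have [N2 H2] := h2 _ e0.
set S := \sum_(i < maxn N1 N2 + maxn N1 N2) u (i%:Z - (maxn N1 N2)%:Z).
have E : l1 - l2 = (S - l2) - (S - l1) by ring.
have : absK (l1 - l2) < absK (l1 - l2).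
  by rewrite {1}E; apply: absKD_lt; rewrite ?absKN; [apply: H2|apply: H1]; lia.
by rewrite ltxx.
Qed.

Lemma tsum_to_tsum u : (exists l, tsum_to absK u l) -> tsum_to absK u (tsum absK u).
Proof. exact: epsilon_spec. Qed.

Lemma tsumE u l : tsum_to absK u l -> tsum absK u = l.
Proof. by move=> h; apply: tsum_to_uniq (tsum_to_tsum (ex_intro _ l h)) h. Qed.

Lemma tsum_to0 : tsum_to absK (fun _ => 0) 0.
Proof. by move=> e e0; exists 0%N => m1 m2 _ _; rewrite big1 // subrr absK0. Qed.

Lemma tsum_toD u v l l' : tsum_to absK u l -> tsum_to absK v l' ->
  tsum_to absK (fun k => u k + v k) (l + l').
Proof.
move=> h h' e e0; have [N1 H1] := h e e0; have [N2 H2] := h' e e0.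
exists (maxn N1 N2) => m1 m2 a1 a2; rewrite big_split /= opprD addrACA.
by apply: absKD_lt; [apply: H1|apply: H2]; lia.
Qed.

Lemma tsum_toZ c u l : tsum_to absK u l -> tsum_to absK (fun k => c * u k) (c * l).
Proof.
move=> h; have [->|c0] := eqVneq c 0.
  by under eq_fun do rewrite mul0r; rewrite mul0r; apply: tsum_to0.
have ac : 0 < absK c by rewrite absK_gt0.
move=> e e0; have [N HN] := h (e / absK c) (divr_gt0 e0 ac).
exists N => m1 m2 a1 a2; rewrite -mulr_sumr -mulrBr absKM.
by rewrite -ltr_pdivlMl // mulrC; apply: HN.
Qed.

Lemma tsum_to_sum (N : nat) (u : 'I_N -> int -> K) (l : 'I_N -> K) :
  (forall j, tsum_to absK (u j) (l j)) ->
  tsum_to absK (fun k => \sum_(j < N) u j k) (\sum_(j < N) l j).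
Proof.
elim: N u l => [|N IH] u l H.
  by under eq_fun do rewrite big_ord0; rewrite big_ord0; apply: tsum_to0.
under eq_fun do rewrite big_ord_recr /=; rewrite big_ord_recr /=.
pose lift (j : 'I_N) := widen_ord (leqnSn N) j.
exact: tsum_toD (IH (fun j => u (lift j)) (fun j => l (lift j)) (fun j => H _)) (H _).
Qed.

Lemma tsum_to_delta (k0 : int) (c : K) :
  tsum_to absK (fun k => if k == k0 then c else 0) c.
Proof.
move=> e e0; exists `|k0|.+1 => m1 m2 a1 a2.
rewrite (eq_bigr (fun i : 'I_(m1 + m2) => if (i : nat) == absz (m1%:Z + k0) then c else 0)).
  by rewrite sum_ord_delta ?subrr ?absK0 //; lia.
by move=> i _; congr (if _ then _ else _); apply/eqP/eqP; lia.
Qed.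

Lemma decays_at_convolution (r : R) g v (m : int) : 0 < r ->
  decays_at r g -> decays_at r v -> decays_at 1 (fun k => g k * v (m - k)).
Proof.
move=> r0 dg dv e e0.
have rm0 : 0 < r ^ m := exprz_gt0 m r0.
have [N1 H1] := dg 1 ltr01.
have [N2 H2] := dv (e * r ^ m) (mulr_gt0 e0 rm0).
exists (N1 + N2 + `|m|)%N => k hk.
have hg := H1 k ltac:(lia).
have hv := H2 (m - k) ltac:(lia).
have -> : absK (g k * v (m - k)) * 1 ^ k =
    (absK (g k) * r ^ k) * (absK (v (m - k)) * r ^ (m - k)) / r ^ m.
  rewrite exp1rz mulr1 absKM mulrACA -expfzDr ?gt_eqF // (_ : k + (m - k) = m).
    by rewrite mulfK ?gt_eqF.
  by rewrite addrC subrK.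
rewrite ltr_pdivrMr //; apply: le_lt_trans hv.
by rewrite ler_piMl ?mulr_ge0 ?absK_ge0 ?ltW ?exprz_gt0.
Qed.

Lemma lmul_poly_ser1 (u : int -> K) m : lmul absK (poly_ser 1) u m = u m.
Proof.
apply: tsumE; rewrite (_ : (fun k => _) = fun k => if k == 0 then u m else 0).
  exact: tsum_to_delta.
by apply: funext => k; rewrite poly_ser1; case: eqP => [->|_]; rewrite ?mul1r ?subr0 ?mul0r.
Qed.

Lemma lmul_poly_ser0 (u : int -> K) m : lmul absK (poly_ser 0) u m = 0.
Proof.
apply: tsumE; rewrite (_ : (fun k => _) = fun k => 0); first exact: tsum_to0.
by apply: funext => -[j|j] /=; rewrite ?coef0 mul0r.
Qed.

Lemma Dnum1S n (G : 'I_n -> 'I_n -> int -> K) f s :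
  Dnum absK G 1 f s.+1 = conn absK G (Dnum absK G 1 f s).
Proof.
apply: funext => i; apply: funext => m.
by rewrite /= /Dstep lmul_poly_ser1 -polyC1 derivC lmul_poly_ser0 mulr0 subr0.
Qed.

Lemma lmul_lpoly_mul (g v : int -> K) W P m :
  (forall m', exists l, tsum_to absK (fun k => g k * v (m' - k)) l) ->
  lmul absK g (lpoly_mul W P v) m = lpoly_mul W P (lmul absK g v) m.
Proof.
move=> hc; apply: tsumE.
rewrite (_ : (fun k => _) = fun k => \sum_(j < W.+1)
           P (- (j : nat)%:Z) * (g k * v ((m + (j : nat)%:Z) - k))).
  by apply: tsum_to_sum => j; apply/tsum_toZ/tsum_to_tsum.
apply: funext => k; rewrite mulr_sumr; apply: eq_bigr => j _.
by rewrite (_ : m + _ - k = m - k + j%:Z) 1?mulrCA //; ring.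
Qed.

Section GaussNorm.
Variable r : R.
Hypothesis r_gt0 : 0 < r.

Definition weighted_abs (v : int -> K) : int -> R := fun m => absK (v m) * r ^ m.

Lemma weighted_abs_ge0 v m : 0 <= weighted_abs v m.
Proof. by rewrite mulr_ge0 ?absK_ge0 ?ltW ?exprz_gt0. Qed.

Lemma decays_at_small v : decays_at r v -> eventually_small (weighted_abs v).
Proof. by move=> dv e /dv[N HN]; exists N. Qed.

Lemma gnorm_has_ubound v : decays_at r v -> has_ubound [set weighted_abs v m | m in setT].
Proof.
move=> /decays_at_small dv.
case: (pselect (exists k0, 0 < weighted_abs v k0)) => [[k0 hk0]|nk].
  by have [ks Hks] := eventually_small_max dv hk0; exists (weighted_abs v ks) => _ [m _ <-].
exists 0 => _ [m _ <-]; rewrite leNgt; apply/negP => h; apply: nk; by exists m.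
Qed.

Lemma weighted_abs_le_gnorm v m : decays_at r v -> weighted_abs v m <= Defs.gnorm absK r v.
Proof. by move=> dv; apply: ub_le_sup (gnorm_has_ubound dv) _ _; exists m. Qed.

Lemma gnorm_ge0 v : decays_at r v -> 0 <= Defs.gnorm absK r v.
Proof. by move=> dv; apply: le_trans (weighted_abs_ge0 v 0) (weighted_abs_le_gnorm 0 dv). Qed.

Lemma gnorm_max v ks : (forall k, weighted_abs v k <= weighted_abs v ks) ->
  Defs.gnorm absK r v = weighted_abs v ks.
Proof.
move=> H; apply/eqP; rewrite eq_le; apply/andP; split.
  by apply: ge_sup; [exists (weighted_abs v ks); exists ks | move=> _ [m _ <-]; apply: H].
by apply: ub_le_sup; [exists (weighted_abs v ks) => _ [m _ <-]; apply: H | exists ks].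
Qed.

Lemma gnorm_poly_ser1 : Defs.gnorm absK r (poly_ser 1) = 1.
Proof.
rewrite (@gnorm_max _ 0) => [|k]; rewrite /weighted_abs !poly_ser1 eqxx absK1 expr0z mulr1 //.
by case: eqP => [->|_]; rewrite ?absK1 ?expr0z ?mulr1 // absK0 mul0r ler01.
Qed.

Lemma decays_at_lpoly_mul W P v : decays_at r v -> decays_at r (lpoly_mul W P v).
Proof.
move=> dv e e0.
pose C := 1 + \sum_(j < W.+1) weighted_abs P (- j%:Z).
have C0 : 0 < C by rewrite ltr_pwDl // sumr_ge0 // => j _; apply: weighted_abs_ge0.
have [N HN] := dv (e / C) (divr_gt0 e0 C0).
exists (N + W)%N => m hm.
have rm0 : 0 < r ^ m := exprz_gt0 m r_gt0.
rewrite -ltr_pdivlMr //; apply: absK_sum_lt => [|j _]; first exact: divr_gt0.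
rewrite ltr_pdivlMr // absKM.
have -> : absK (P (- j%:Z)) * absK (v (m + j%:Z)) * r ^ m =
    weighted_abs P (- j%:Z) * weighted_abs v (m + j%:Z).
  by rewrite mulrACA -expfzDr ?gt_eqF // (_ : - _ + _ = m) //; ring.
have PC : weighted_abs P (- j%:Z) <= C.
  rewrite /C (bigD1 j) //= addrA ler_wpDr ?ler_wpDl // sumr_ge0 // => i _.
  exact: weighted_abs_ge0.
apply: le_lt_trans (ler_wpM2r (weighted_abs_ge0 _ _) PC) _.
by rewrite mulrC -ltr_pdivlMr //; apply: HN; have := ltn_ord j; lia.
Qed.

(* The product of the leading terms, taken at the least indices where the
   weighted absolute values are maximal, strictly dominates every other term of
   the coefficient of [x^(kP + kv)]. *)
Lemma weighted_abs_lpoly_mul_lead W P v kP kv : supported_in W P -> P kP != 0 ->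
  least_argmax (weighted_abs P) kP -> least_argmax (weighted_abs v) kv ->
  0 < weighted_abs v kv ->
  weighted_abs (lpoly_mul W P v) (kP + kv) = weighted_abs P kP * weighted_abs v kv.
Proof.
move=> sP PkP [HP1 HP2] [Hv1 Hv2] v0.
have P0 : 0 < weighted_abs P kP by rewrite mulr_gt0 ?absK_gt0 ?exprz_gt0.
have kP_range : - W%:Z <= kP <= 0.
  by apply/negPn/negP => h; move/eqP: PkP; apply; apply: sP; move: h; lia.
set m := kP + kv.
have rm0 : 0 < r ^ m := exprz_gt0 m r_gt0.
have term (j : 'I_W.+1) : absK (P (- j%:Z) * v (m + j%:Z)) * r ^ m =
    weighted_abs P (- j%:Z) * weighted_abs v (m + j%:Z).
  by rewrite absKM mulrACA -expfzDr ?gt_eqF // (_ : - _ + _ = m) //; ring.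
have j0lt : (absz (- kP) < W.+1)%N by lia.
pose j0 := Ordinal j0lt.
have lead : absK (P (- j0%:Z) * v (m + j0%:Z)) * r ^ m =
    weighted_abs P kP * weighted_abs v kv.
  rewrite term /=.
  have -> : - (absz (- kP))%:Z = kP by lia.
  by have -> : m + (absz (- kP))%:Z = kv by rewrite /m; lia.
rewrite {1}/weighted_abs /lpoly_mul (bigD1 j0) // absKD_dom ?lead //.
rewrite -(ltr_pM2r rm0) lead -ltr_pdivlMr //.
apply: absK_sum_lt => [|j hj]; first exact: divr_gt0 (mulr_gt0 P0 v0) rm0.
rewrite ltr_pdivlMr // term.
case: (ltgtP (- j%:Z) kP) => c.
- exact: ltr_leM (weighted_abs_ge0 _ _) (HP2 _ c) (weighted_abs_ge0 _ _) (Hv1 _) v0.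
- rewrite mulrC [X in _ < X]mulrC.
  apply: ltr_leM (weighted_abs_ge0 _ _) _ (weighted_abs_ge0 _ _) (HP1 _) P0.
  by apply: Hv2; rewrite /m; lia.
- by case/eqP: hj; apply: val_inj => /=; lia.
Qed.

Lemma gnorm_lpoly_mul_ge W P v k : decays_at r v -> supported_in W P ->
  weighted_abs P k * Defs.gnorm absK r v <= Defs.gnorm absK r (lpoly_mul W P v).
Proof.
move=> dv sP.
have dPv := decays_at_lpoly_mul W P dv.
case: (pselect (exists k0, 0 < weighted_abs v k0)) => [[k0 hk0]|nk]; last first.
  have v_le0 k' : weighted_abs v k' <= 0 by rewrite leNgt; apply/negP => h; apply: nk; exists k'.
  have v00 : weighted_abs v 0 = 0 by apply/eqP; rewrite eq_le v_le0 weighted_abs_ge0.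
  by rewrite (@gnorm_max v 0) => [|k']; rewrite v00 ?mulr0 ?gnorm_ge0.
have [Pk0|Pk_gt0] := eqVneq (weighted_abs P k) 0; first by rewrite Pk0 mul0r gnorm_ge0.
have {}Pk_gt0 : 0 < weighted_abs P k by rewrite lt_def Pk_gt0 weighted_abs_ge0.
have P_small : eventually_small (weighted_abs P).
  move=> e e0; exists W.+1 => k' hk'.
  by rewrite /weighted_abs sP ?absK0 ?mul0r //; lia.
have [kv max_v] := eventually_small_least_argmax (decays_at_small dv) hk0.
have [kP max_P] := eventually_small_least_argmax P_small Pk_gt0.
have [[Hv1 _] [HP1 _]] := (max_v, max_P).
have v0 : 0 < weighted_abs v kv by apply: lt_le_trans hk0 (Hv1 _).
have PkP : P kP != 0.
  apply: contraTneq (lt_le_trans Pk_gt0 (HP1 k)) => Pk0.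
  by rewrite /weighted_abs Pk0 absK0 mul0r ltxx.
apply: le_trans (weighted_abs_le_gnorm (kP + kv) dPv).
rewrite (weighted_abs_lpoly_mul_lead sP PkP max_P max_v) ?(gnorm_max Hv1) //.
by rewrite ler_wpM2r ?weighted_abs_ge0.
Qed.

Lemma gnorm_le_vnorm n (v : 'I_n -> int -> K) i :
  Defs.gnorm absK r (v i) <= vnorm absK r v.
Proof. exact: (le_bigmax _ (fun i => Defs.gnorm absK r (v i)) i). Qed.

Lemma vnorm_gt0 n (v : 'I_n -> int -> K) i m :
  decays_at r (v i) -> v i m != 0 -> 0 < vnorm absK r v.
Proof.
move=> dv vim; apply: lt_le_trans (gnorm_le_vnorm v i).
apply: lt_le_trans (weighted_abs_le_gnorm m dv).
by rewrite mulr_gt0 ?absK_gt0 ?exprz_gt0.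
Qed.

Lemma weighted_abs_Dcoef_lowest pi s :
  weighted_abs (Dcoef pi s) (- (2 * s)%N%:Z) = (absK pi / r ^+ 2) ^+ s.
Proof.
by rewrite /weighted_abs Dcoef_lowest absKX exprMn exprVn -exprM -exprnN.
Qed.
End GaussNorm.

Section Horizontal.
Variables (n : nat) (G : 'I_n -> 'I_n -> int -> K) (pi : K) (f : 'I_n -> int -> K).
Variable r : R.
Hypotheses (r_gt0 : 0 < r) (G_decays : forall i j, decays_at r (G i j))
  (f_decays : forall i, decays_at r (f i)).
Hypothesis f_horizontal : forall i m, conn absK (tensorL pi G) f i m = 0.

Lemma lmul_G_f_summable i l m :
  exists L, tsum_to absK (fun k => G i l k * f l (m - k)) L.
Proof. exact/tsum_to_exists/(decays_at_convolution _ r_gt0). Qed.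

Lemma lmul_tensorL i l m : lmul absK (tensorL pi G i l) (f l) m =
  lmul absK (G i l) (f l) m - (if l == i then pi * f l (m + 2) else 0).
Proof.
have /tsum_to_tsum GfL := lmul_G_f_summable i l m.
set Y := if l == i then _ else _; apply: tsumE.
suff -> : (fun k => tensorL pi G i l k * f l (m - k)) =
    fun k => G i l k * f l (m - k) + (-1) * (if k == -2 then Y else 0).
  by rewrite -[- Y]mulN1r; apply/(tsum_toD GfL)/tsum_toZ/tsum_to_delta.
apply: funext => k; rewrite /tensorL /Y eq_sym.
by case: (l == i); case: eqP => [->|_]; rewrite ?opprK ?subr0 ?mulr0 ?addr0 //=; ring.
Qed.

Lemma conn_horizontal i m :
  \sum_(l < n) lmul absK (G i l) (f l) m = pi * f i (m + 2) - lderiv (f i) m.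
Proof.
have := f_horizontal i m; rewrite /conn.
under eq_bigr do rewrite lmul_tensorL.
rewrite sumrB -big_mkcond big_pred1_eq => h.
by apply/eqP; rewrite -subr_eq0; apply/eqP; rewrite -[RHS]h; ring.
Qed.

Lemma Dnum1_horizontal s i :
  Dnum absK G 1 f s i = lpoly_mul (2 * s) (Dcoef pi s) (f i).
Proof.
elim: s i => [|s IH] i; apply: funext => m.
  by rewrite /lpoly_mul big_ord1 /= mul1r addr0.
have sD : supported_in (2 * s) (Dcoef pi s) := @Dcoef_supported K pi s.
rewrite Dnum1S (_ : Dnum _ _ _ _ _ = fun i => lpoly_mul (2 * s) (Dcoef pi s) (f i));
  last by apply: funext => i'; apply: IH.
rewrite /conn lderiv_lpoly_mul //.
under eq_bigr => l _ do rewrite (lmul_lpoly_mul _ _ _ (lmul_G_f_summable i l)).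
rewrite lpoly_mul_sum.
rewrite (_ : (fun m => _) = fun m => pi * f i (m + 2) - lderiv (f i) m);
  last by apply: funext => m'; apply: conn_horizontal.
rewrite lpoly_mulB lpoly_mul_shift2 //.
have -> : (2 * s.+1 = (2 * s).+2)%N by lia.
rewrite /= lpoly_mulDl (@lpoly_mul_widen _ (2 * s).+1 (2 * s).+2) //; first by ring.
exact: supported_in_lderiv.
Qed.

Lemma vnorm_Dnum1_ge s :
  (absK pi / r ^+ 2) ^+ s * vnorm absK r f <= vnorm absK r (Dnum absK G 1 f s).
Proof.
have [->|cs0] := eqVneq ((absK pi / r ^+ 2) ^+ s) 0; first by rewrite mul0r bigmax_ge_id.
have {}cs0 : 0 < (absK pi / r ^+ 2) ^+ s.
  by rewrite lt_def cs0 exprn_ge0 // divr_ge0 ?absK_ge0 ?exprn_ge0 ?ltW.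
rewrite mulrC -ler_pdivlMr // {1}/vnorm.
apply: bigmax_le => [|i _]; first by rewrite divr_ge0 ?bigmax_ge_id ?ltW.
rewrite ler_pdivlMr // mulrC -(weighted_abs_Dcoef_lowest r).
apply: le_trans (gnorm_le_vnorm r _ i); rewrite Dnum1_horizontal.
by apply: (gnorm_lpoly_mul_ge r_gt0); [apply: f_decays | apply: Dcoef_supported].
Qed.

(* [opnorm_pow] is a sup over a dense subset; the element [f / 1] suffices. *)
Lemma opnorm_pow_ge a b s : (forall i, analytic_on absK a b (f i)) ->
  0 < vnorm absK r f ->
  opnorm_pow absK a b G r s = 0 \/ (absK pi / r ^+ 2) ^+ s <= opnorm_pow absK a b G r s.
Proof.
move=> f_an f_gt0; rewrite /opnorm_pow; set S := (X in sup X).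
have Sf : S (vnorm absK r (Dnum absK G 1 f s) /
             (vnorm absK r f * Defs.gnorm absK r (poly_ser 1) ^+ s)).
  by exists f, 1; split; rewrite ?oner_neq0 ?gt_eqF.
case: (pselect (has_ubound S)) => [S_ub|S_nub]; last first.
  by left; apply: sup_out => -[_ h]; apply: S_nub.
right; apply: le_trans (ub_le_sup S_ub Sf).
by rewrite gnorm_poly_ser1 // expr1n mulr1 ler_pdivlMr // vnorm_Dnum1_ge.
Qed.

Lemma spec_norm_ge a b : pi != 0 -> (forall i, analytic_on absK a b (f i)) ->
  0 < vnorm absK r f -> spec_norm absK a b G r != 0 ->
  absK pi / r ^+ 2 <= spec_norm absK a b G r.
Proof.
move=> pi0 f_an f_gt0; apply: limn_root_ge => [|s _]; last exact: opnorm_pow_ge.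
by rewrite divr_gt0 ?absK_gt0 ?exprn_gt0.
Qed.

End Horizontal.
End Ultrametric.

Lemma pi_neq0 (K : fieldType) (p : nat) (pi : K) : [pchar K] =i pred0 ->
  prime p -> pi ^+ p.-1 + p%:R = 0 -> pi != 0.
Proof.
move=> K_char0 p_prime pi_p; apply/eqP => pi0.
have p_neq0 : p%:R != 0 :> K by have := K_char0 p; rewrite !inE p_prime /= => ->.
have p1_neq0 : (p.-1 != 0)%N by have := prime_gt1 p_prime; lia.
by move: pi_p; rewrite pi0 expr0n (negbTE p1_neq0) add0r => /eqP; rewrite (negbTE p_neq0).
Qed.

Unset Implicit Arguments.

Theorem mainTheorem4 (R : realType) (K : fieldType) (absK : K -> R)
    (p : nat) (pi : K) (a b : R) (n : nat) (G : 'I_n -> 'I_n -> int -> K) :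
  [pchar K] =i pred0 ->
  ultrametric_abs absK -> K_complete absK ->
  prime p -> absK p%:R < 1 ->
  pi ^+ p.-1 + p%:R = 0 ->
  0 < a -> a <= b -> b < 1 ->
  (forall i j, analytic_on absK a b (G i j)) ->
  robba absK pi a b G ->
  forall f : 'I_n -> int -> K,
    (forall i, analytic_on absK a b (f i)) ->
    (forall i m, conn absK (tensorL pi G) f i m = 0) ->
    forall i m, f i m = 0.
Proof.
move=> K_char0 ultra complete p_prime abs_p pi_p a_gt0 ab b_lt1 G_an robba_G f f_an f_hor i m.
case: (eqVneq (f i m) 0) => // fim; exfalso.
have p_gt0 := prime_gt0 p_prime.
have pi0 := pi_neq0 K_char0 p_prime pi_p.
have a_ab : a <= a <= b by rewrite lexx ab.
have f_vnorm := vnorm_gt0 ultra p_gt0 abs_p a_gt0 (f_an i a a_ab) fim.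
have spec_a : spec_norm absK a b G a = absK pi / a.
  have := robba_G a a_ab; rewrite /Defs.radius => rad.
  have sn0 : spec_norm absK a b G a != 0.
    by apply/eqP => sn; move: rad; rewrite sn invr0 mulr0 => /eqP; rewrite lt_eqF.
  by rewrite -[in RHS]rad invf_div mulrC divfK // (absK_eq0 ultra).
have : absK pi / a ^+ 2 <= absK pi / a.
  rewrite -spec_a; apply: (spec_norm_ge ultra p_gt0 abs_p complete a_gt0) => //.
  - by move=> i' j; apply: G_an.
  - by move=> i'; apply: f_an.
  - by rewrite spec_a mulf_neq0 ?invr_eq0 ?(absK_eq0 ultra) ?gt_eqF.
apply/negP; rewrite -ltNge ltr_pM2l ?(absK_gt0 ultra p_gt0 abs_p) // ltf_pV2 ?posrE ?exprn_gt0 //.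
by rewrite expr2 gtr_pMr // (le_lt_trans ab b_lt1).
Qed.
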